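(* Let $(W,S)$ be a Coxeter system with $S$ finite and let $D_1,\dots,D_m$ be non-empty subsets of $W$ such that the multiplication map $D_1\times\cdots\times D_m\to W$ is a bijection and $D_1(u)\cdots D_m(u)=W(u)$. Then for every representation $\rho$ of the Hecke algebra $H_q(W,S)$, $$W(\rho,u)=D_1(\rho,u)\cdots D_m(\rho,u)\quad\text{in }\mathrm{End}(V_\rho)[[u]].$$
   Context: $\ell$ is the length function of $(W,S)$. For $D\subseteq W$, $D(u)=\sum_{w\in D}u^{\ell(w)}$. The Hecke algebra $H_q(W,S)$ (over a field $k$, with parameter $q$) is the associative algebra with basis $\{e_w\}_{w\in W}$ whose multiplication is characterized by $(e_s+1)(e_s-q)=0$ for $s\in S$ and $e_we_v=e_{wv}$ whenever $\ell(wv)=\ell(w)+\ell(v)$. For a representation $(\rho,V_\rho)$ of $H_q(W,S)$ and $D\subseteq W$, the twisted Poincaré series is $D(\rho,u)=\sum_{w\in D}\rho(e_w)u^{\ell(w)}\in\mathrm{End}(V_\rho)[[u]]$. *)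

From HB Require Import structures.
From mathcomp Require Import all_boot all_order all_algebra.
From Stdlib Require Import Classical ClassicalEpsilon.
Set Implicit Arguments. Unset Strict Implicit. Unset Printing Implicit Defensive.
Import GRing.Theory.

Section Coxeter.
Variable W : groupType.
Implicit Types (S : seq W) (w : W).

Fixpoint words S (n : nat) : seq (seq W) :=
  if n is n'.+1 then [seq s :: l | s <- S, l <- words S n'] else [:: [::]].

Definition wprod (l : seq W) : W := (\prod_(s <- l) s)%g.

Definition reach S w (n : nat) : bool := has (fun l => wprod l == w) (words S n).

(* the length function l(w) = min { n | w is a product of n elements of S }
   (default 0 if w is not in the subgroup generated by S, which never happens
   for a Coxeter system) *)
Definition coxlen S w : nat :=
  match excluded_middle_informative (exists n, reach S w n) with
  | left H => ex_minn H
  | right _ => 0%N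
  end.

(* (W,S) is a Coxeter system: S is a (finite) set of involutions generating W,
   and W has the presentation < S | (s t)^{m(s,t)} = 1 >, m(s,t) = order of st,
   expressed via the universal property of the presentation. *)
Definition coxeter_system S : Prop :=
  [/\ forall s, s \in S -> s != 1%g /\ (s * s = 1)%g,
      forall w, exists l : seq W, all (mem S) l /\ wprod l = w &
      forall (G : groupType) (f : W -> G),
        (forall s t (n : nat), s \in S -> t \in S ->
            ((s * t) ^+ n = 1)%g -> ((f s * f t) ^+ n = 1)%g) ->
        exists phi : W -> G,
          (forall x y, phi (x * y)%g = (phi x * phi y)%g) /\
          (forall s, s \in S -> phi s = f s)].

Definition sphere S (n : nat) : seq W :=
  [seq w <- undup [seq wprod l | l <- words S n] | coxlen S w == n].

(* Poincare series D(u) = sum_{w in D} u^{l(w)} in Z[[u]], as its sequence of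
   coefficients *)
Definition poincare S (D : pred W) : nat -> int :=
  fun n => (\sum_(w <- sphere S n | w \in D) 1)%R.

Definition sermul (R : pzRingType) (a b : nat -> R) : nat -> R :=
  fun n => (\sum_(i < n.+1) a i * b (n - i)%N)%R.
Definition serone (R : pzRingType) : nat -> R := fun n => ((n == 0%N)%:R)%R.
Definition serprod (R : pzRingType) (l : seq (nat -> R)) : nat -> R :=
  foldr (@sermul R) (@serone R) l.

(* Formal power series with coefficients in End(V) (endomorphisms given as
   functions V -> V), their product (composition) and ordered products *)
Definition endmul (k : pzRingType) (V : lmodType k) (A B : nat -> V -> V)
  : nat -> V -> V :=
  fun n x => (\sum_(i < n.+1) A i (B (n - i)%N x))%R.
Definition endone (k : pzRingType) (V : lmodType k) : nat -> V -> V :=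
  fun n x => if n == 0%N then x else 0%R.
Definition endprod (k : pzRingType) (V : lmodType k) (l : seq (nat -> V -> V))
  : nat -> V -> V := foldr (@endmul k V) (@endone k V) l.

Definition twisted (k : pzRingType) (V : lmodType k) S (rho : W -> V -> V)
  (D : pred W) : nat -> V -> V :=
  fun n x => (\sum_(w <- sphere S n | w \in D) rho w x)%R.

(* A representation of the Hecke algebra H_q(W,S) on V, given by the images
   rho w = rho(e_w) of the basis elements e_w: linear maps such that
   e_1 acts as the identity, (e_s + 1)(e_s - q) acts as 0, and
   e_w e_v = e_{wv} whenever l(wv) = l(w) + l(v). *)
Definition hecke_rep (k : fieldType) (q : k) (V : lmodType k) S
  (rho : W -> V -> V) : Prop :=
  [/\ forall w (a : k) (x y : V), rho w (a *: x + y)%R = (a *: rho w x + rho w y)%R,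
      forall x, rho 1%g x = x,
      forall s, s \in S -> forall x : V,
        (rho s (rho s x - q *: x) + (rho s x - q *: x))%R = 0%R &
      forall w v, coxlen S (w * v)%g = (coxlen S w + coxlen S v)%N ->
        forall x, rho (w * v)%g x = rho w (rho v x)].

Definition mult_bijective (m : nat) (D : 'I_m -> pred W) : Prop :=
  (forall w, exists d : 'I_m -> W, (forall i, d i \in D i) /\ (\prod_(i < m) d i)%g = w)
  /\ (forall d d' : 'I_m -> W, (forall i, d i \in D i) -> (forall i, d' i \in D i) ->
        (\prod_(i < m) d i)%g = (\prod_(i < m) d' i)%g -> forall i, d i = d' i).

End Coxeter.

From HB Require Import structures.
From mathcomp Require Import all_boot all_order all_algebra.
From Stdlib Require Import ClassicalEpsilon.
Set Implicit Arguments. Unset Strict Implicit. Unset Printing Implicit Defensive.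
Import GRing.Theory.

(* Expanding the product of twisted series, the coefficient of u^n on the right
   is the sum of rho(d_1) ... rho(d_m) over the tuples (d_1, ..., d_m) with
   d_i in D_i and total length l(d_1) + ... + l(d_m) = n; the Poincare
   identity says there are exactly as many such tuples as elements of length
   n.  By induction on n, every such tuple has a product of length exactly n:
   subadditivity gives <= n, and a shorter product would already be the
   product of a tuple of smaller total length (those tuples exhaust the
   shorter elements by induction and counting), contradicting the
   injectivity of multiplication.  Hence the products of these tuples
   enumerate the elements of length n, and the lengths add up, so that
   rho(d_1) ... rho(d_m) = rho(e_{d_1 ... d_m}). *)

Lemma uniq_flatten_graded (I T : eqType) (f : I -> seq T) (g : T -> I)
  (s : seq I) :
  uniq s -> (forall i x, x \in f i -> g x = i) -> (forall i, uniq (f i)) ->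
  uniq (flatten [seq f i | i <- s]).
Proof.
move=> uniq_s fg uniq_f; elim: s uniq_s => [|i s IHs] //= /andP[i_notin_s uniq_s].
rewrite cat_uniq uniq_f IHs // andbT; apply/hasPn => x /flatten_mapP[j j_s xj].
by apply/negP => xi; move: i_notin_s; rewrite -(fg _ _ xi) (fg _ _ xj) j_s.
Qed.

Lemma perm_map_inj_in (T1 T2 : eqType) (f : T1 -> T2) (s : seq T1) (r : seq T2) :
  uniq s -> uniq r -> {in s &, injective f} ->
  {subset [seq f x | x <- s] <= r} -> size r <= size s ->
  perm_eq [seq f x | x <- s] r.
Proof.
move=> uniq_s uniq_r f_inj fs_r size_r.
have uniq_fs : uniq [seq f x | x <- s] by rewrite map_inj_in_uniq.
have [|_ eq_fs_r] := uniq_min_size uniq_fs fs_r; first by rewrite size_map.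
exact: uniq_perm.
Qed.

Section CoxeterLength.
Variables (W : groupType) (S : seq W).

Lemma mem_words n l : (l \in words S n) = (size l == n) && all (mem S) l.
Proof.
elim: n l => [|n IHn] [|a l] //.
  by apply/negbTE/negP => /allpairsP[[x y] /= [_ _]].
apply/allpairsP/idP => [[[x y] /= [xS y_words [-> ->]]]|].
  by move: y_words; rewrite /= -/(words S n) IHn xS eqSS.
move=> /andP[/eqP[size_l] /andP[aS l_S]]; exists (a, l); split=> //=.
by rewrite -/(words S n) IHn size_l eqxx.
Qed.

Lemma wprod_cons (d : W) (t : seq W) : wprod (d :: t) = (d * wprod t)%g.
Proof. by rewrite /wprod big_cons. Qed.

Lemma reach_mul x y a b : reach S x a -> reach S y b -> reach S (x * y)%g (a + b).
Proof.
move=> /hasP[l1 l1_words /eqP <-] /hasP[l2 l2_words /eqP <-].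
apply/hasP; exists (l1 ++ l2); last by rewrite /wprod big_cat.
move: l1_words l2_words; rewrite !mem_words size_cat all_cat.
by move=> /andP[/eqP-> ->] /andP[/eqP-> ->]; rewrite eqxx.
Qed.

Lemma coxlen_min w n : reach S w n -> coxlen S w <= n.
Proof.
move=> reach_n; rewrite /coxlen; case: excluded_middle_informative => // H.
by case: ex_minnP => k _; apply.
Qed.

Lemma coxlen1 : coxlen S 1%g = 0.
Proof.
by apply/eqP; rewrite -leqn0 coxlen_min //= /reach /= /wprod big_nil eqxx.
Qed.

Definition total_length (t : seq W) : nat := sumn [seq coxlen S d | d <- t].

Hypothesis generated : forall w, exists n, reach S w n.

Lemma coxlen_reach w : reach S w (coxlen S w).
Proof.
rewrite /coxlen; case: excluded_middle_informative => [H|[]]; last exact: generated.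
by case: ex_minnP.
Qed.

Lemma leq_coxlenM x y : coxlen S (x * y)%g <= coxlen S x + coxlen S y.
Proof. by apply/coxlen_min/reach_mul; apply: coxlen_reach. Qed.

Lemma leq_coxlen_wprod t : coxlen S (wprod t) <= total_length t.
Proof.
elim: t => [|d t IHt]; first by rewrite /wprod big_nil coxlen1.
by rewrite wprod_cons (leq_trans (leq_coxlenM _ _)) // leq_add2l.
Qed.

Lemma mem_sphere n w : (w \in sphere S n) = (coxlen S w == n).
Proof.
rewrite /sphere mem_filter; case: eqP => //= <-.
have /hasP[l l_words /eqP l_w] := coxlen_reach w.
by rewrite mem_undup; apply/mapP; exists l.
Qed.

Lemma uniq_sphere n : uniq (sphere S n).
Proof. by rewrite filter_uniq // undup_uniq. Qed.

Lemma poincare_predT n : poincare S predT n = (size (sphere S n))%:R%R.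
Proof. by rewrite /poincare -sum1_size natr_sum; apply: eq_bigl. Qed.

Definition ball n : seq W := flatten [seq sphere S i | i <- iota 0 n.+1].

Lemma mem_ball n w : (w \in ball n) = (coxlen S w <= n).
Proof.
apply/flatten_mapP/idP => [[i]|le_w_n].
  by rewrite mem_iota mem_sphere => /andP[_ lt_i_n] /eqP->.
by exists (coxlen S w); rewrite ?mem_sphere // mem_iota.
Qed.

Lemma uniq_ball n : uniq (ball n).
Proof.
apply: (uniq_flatten_graded (g := coxlen S)) => [|i x|]; first exact: iota_uniq.
  by rewrite mem_sphere => /eqP.
exact: uniq_sphere.
Qed.

Definition fits (Ds : seq (pred W)) (t : seq W) : bool :=
  all2 (fun d (P : pred W) => d \in P) t Ds.

Fixpoint factorizations (Ds : seq (pred W)) (n : nat) : seq (seq W) :=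
  if Ds is P :: Ds' then
    [seq d :: t | d <- [seq d <- ball n | d \in P],
                  t <- factorizations Ds' (n - coxlen S d)]
  else if n == 0 then [:: [::]] else [::].

Lemma mem_factorizations Ds n t :
  (t \in factorizations Ds n) = fits Ds t && (total_length t == n).
Proof.
elim: Ds n t => [|P Ds IHDs] n t; first by case: n; case: t.
apply/allpairsPdep/idP => [[d [t' [d_ball t'_fact ->]]]|].
  move: d_ball t'_fact; rewrite mem_filter mem_ball IHDs.
  move=> /andP[dP le_d_n] /andP[fits_t' /eqP len_t'].
  rewrite /fits /= -/(fits Ds t') dP fits_t'.
  by rewrite /total_length /= -/(total_length t') len_t' subnKC.
case: t => [|d t'] //= /andP[/andP[dP fits_t'] /eqP len_t].
exists d, t'; rewrite mem_filter dP mem_ball IHDs fits_t' -len_t /total_length /=.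
by rewrite leq_addr addKn eqxx.
Qed.

Lemma uniq_factorizations Ds n : uniq (factorizations Ds n).
Proof.
elim: Ds n => [|P Ds IHDs] n /=; first by case: n.
apply: allpairs_uniq_dep => //; first by rewrite filter_uniq // uniq_ball.
by move=> [d1 t1] [d2 t2] _ _ /= [-> ->].
Qed.

Lemma big_factorizations_cons (R : nmodType) P Ds n (F : seq W -> R) :
  (\sum_(t <- factorizations (P :: Ds) n) F t =
   \sum_(i < n.+1) \sum_(d <- sphere S i | d \in P)
      \sum_(t <- factorizations Ds (n - i)) F (d :: t))%R.
Proof.
rewrite /= big_allpairs_dep big_filter big_flatten big_map -/(index_iota 0 n.+1).
rewrite big_mkord; apply: eq_bigr => i _.
rewrite big_seq_cond [RHS]big_seq_cond; apply: eq_bigr => d.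
by rewrite mem_sphere => /andP[/eqP-> _].
Qed.

Lemma size_factorizations Ds n :
  ((size (factorizations Ds n))%:R : int)%R = serprod [seq poincare S P | P <- Ds] n.
Proof.
elim: Ds n => [|P Ds IHDs] n; first by case: n.
rewrite -sum1_size natr_sum big_factorizations_cons /= /sermul.
apply: eq_bigr => i _.
rewrite -IHDs /poincare mulr_suml; apply: eq_bigr => d _.
by rewrite mul1r -sum1_size natr_sum.
Qed.

End CoxeterLength.

Lemma coxeter_generated (W : groupType) (S : seq W) :
  coxeter_system S -> forall w, exists n, reach S w n.
Proof.
case=> _ gen _ w; have [l [l_S <-]] := gen w.
by exists (size l); apply/hasP; exists l; rewrite ?mem_words ?eqxx.
Qed.

Lemma fits_nth (W : groupType) (Ds : seq (pred W)) t : fits Ds t ->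
  size t = size Ds /\ forall i, i < size Ds -> nth 1%g t i \in nth xpredT Ds i.
Proof.
elim: t Ds => [|d t IHt] [|P Ds] //= /andP[dP /IHt[size_t fits_t]].
by split=> [|[|i]] //=; [rewrite size_t | apply: fits_t].
Qed.

Lemma mult_bijective_fits_inj (W : groupType) m (D : 'I_m -> pred W) :
  mult_bijective D -> forall t t', let Ds := [seq D i | i <- enum 'I_m] in
  fits Ds t -> fits Ds t' -> wprod t = wprod t' -> t = t'.
Proof.
move=> [_ mul_inj] t t' Ds.
have size_Ds : size Ds = m by rewrite size_map size_enum_ord.
have nth_Ds (i : 'I_m) : nth xpredT Ds i = D i.
  by rewrite (nth_map i) ?size_enum_ord // nth_ord_enum.
have fits_ord s : fits Ds s ->
    size s = m /\ (forall i : 'I_m, nth 1%g s i \in D i) /\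
    wprod s = (\prod_(i < m) nth 1%g s i)%g.
  move=> /fits_nth[size_s nth_s]; rewrite size_Ds in size_s nth_s.
  split; first exact: size_s.
  split; first by move=> i; rewrite -nth_Ds nth_s.
  by rewrite /wprod (big_nth 1%g) size_s big_mkord.
move=> /fits_ord[size_t [t_D ->]] /fits_ord[size_t' [t'_D ->]] /(mul_inj _ _ t_D t'_D).
move=> eq_nth; apply: (@eq_from_nth _ 1%g) => [|i]; first by rewrite size_t size_t'.
by rewrite size_t => lt_i_m; apply: (eq_nth (Ordinal lt_i_m)).
Qed.

Section HeckeSeries.
Variables (W : groupType) (S : seq W) (k : fieldType) (V : lmodType k).
Variable rho : W -> V -> V.
Hypothesis generated : forall w, exists n, reach S w n.

Lemma endprod_twisted_factorizations :
  (forall w, {morph rho w : a b / (a + b)%R}) -> forall Ds n x,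
  endprod [seq twisted S rho P | P <- Ds] n x =
  (\sum_(t <- factorizations S Ds n) foldr rho x t)%R.
Proof.
move=> rhoD; have rho0 w : rho w 0%R = 0%R.
  by apply: (addrI (rho w 0%R)); rewrite -rhoD !addr0.
have rho_sum w (s : seq (seq W)) (F : seq W -> V) :
    rho w (\sum_(t <- s) F t)%R = (\sum_(t <- s) rho w (F t))%R.
  by elim: s => [|a s IHs]; rewrite ?big_nil ?rho0 // !big_cons rhoD IHs.
elim=> [|P Ds IHDs] n x; first by case: n => [|n]; rewrite /= ?big_seq1 ?big_nil.
rewrite big_factorizations_cons //= /endmul; apply: eq_bigr => i _.
by rewrite IHDs /twisted; apply: eq_bigr => d _; rewrite rho_sum.
Qed.

Variable q : k.
Hypothesis Hrho : hecke_rep q S rho.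

Lemma hecke_rep_wprod t x :
  coxlen S (wprod t) = total_length S t -> rho (wprod t) x = foldr rho x t.
Proof.
have [_ rho1 _ rhoM] := Hrho.
elim: t => [|d t IHt] /=; first by rewrite /wprod big_nil rho1.
rewrite wprod_cons => len_dt.
have len_t : coxlen S (wprod t) = total_length S t.
  apply/eqP; rewrite eqn_leq leq_coxlen_wprod //= -(leq_add2l (coxlen S d)).
  by rewrite (leq_trans _ (leq_coxlenM generated _ _)) // len_dt.
by rewrite rhoM ?IHt // len_dt len_t.
Qed.

End HeckeSeries.

Section Factorization.
Variables (W : groupType) (S : seq W) (Ds : seq (pred W)).
Hypotheses (generated : forall w, exists n, reach S w n)
  (fits_inj : forall t t', fits Ds t -> fits Ds t' -> wprod t = wprod t' -> t = t')
  (size_factorizations_sphere :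
     forall n, size (factorizations S Ds n) = size (sphere S n)).

Lemma perm_factorizations_sphere n :
  (forall t, t \in factorizations S Ds n -> coxlen S (wprod t) = n) ->
  perm_eq [seq wprod t | t <- factorizations S Ds n] (sphere S n).
Proof.
move=> len_n; apply: perm_map_inj_in.
- exact: uniq_factorizations.
- exact: uniq_sphere.
- move=> t t'; rewrite !(mem_factorizations generated).
  by move=> /andP[fits_t _] /andP[fits_t' _]; apply: fits_inj.
- by move=> _ /mapP[t t_fact ->]; rewrite mem_sphere // len_n.
- by rewrite size_factorizations_sphere.
Qed.

Lemma coxlen_factorization n t :
  t \in factorizations S Ds n -> coxlen S (wprod t) = n.
Proof.
elim/ltn_ind: n t => n IHn t.
rewrite (mem_factorizations generated) => /andP[fits_t /eqP len_t].
apply/eqP; rewrite eqn_leq -{1}len_t leq_coxlen_wprod //= leqNgt; apply/negP => lt_j_n.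
have : wprod t \in sphere S (coxlen S (wprod t)) by rewrite mem_sphere.
rewrite -(perm_mem (perm_factorizations_sphere (IHn _ lt_j_n))).
case/mapP=> y; rewrite (mem_factorizations generated) => /andP[fits_y /eqP len_y] eq_ty.
by move: lt_j_n; rewrite -len_y -len_t (fits_inj fits_t fits_y eq_ty) ltnn.
Qed.

Lemma twisted_predT_factorizations (k : fieldType) (q : k) (V : lmodType k)
  (rho : W -> V -> V) : hecke_rep q S rho -> forall n x,
  twisted S rho predT n x = (\sum_(t <- factorizations S Ds n) foldr rho x t)%R.
Proof.
move=> Hrho n x; rewrite (eq_big_seq (fun t => rho (wprod t) x)); last first.
  move=> t t_fact; rewrite (hecke_rep_wprod generated Hrho) //.
  move: (t_fact); rewrite (mem_factorizations generated) => /andP[_ /eqP->].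
  exact: coxlen_factorization.
rewrite -(big_map (@wprod W) xpredT (fun w => rho w x)) /twisted.
rewrite (perm_big _ (perm_factorizations_sphere (@coxlen_factorization n))).
exact: eq_bigl.
Qed.

End Factorization.

Theorem mainTheorem5 (W : groupType) (S : seq W) (m : nat) (D : 'I_m -> pred W)
  (Hcox : coxeter_system S)
  (Hne : forall i, exists d, d \in D i)
  (Hbij : mult_bijective D)
  (Hpoin : forall n, serprod [seq poincare S (D i) | i <- enum 'I_m] n
                     = poincare S predT n)
  (k : fieldType) (q : k) (V : lmodType k) (rho : W -> V -> V)
  (Hrho : hecke_rep q S rho) :
  forall (n : nat) (x : V),
    twisted S rho predT n x
    = endprod [seq twisted S rho (D i) | i <- enum 'I_m] n x.
Proof.
move=> n x; have generated := coxeter_generated Hcox.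
set Ds := [seq D i | i <- enum 'I_m].
have size_fact j : size (factorizations S Ds j) = size (sphere S j).
  apply/eqP; rewrite -(Num.Theory.eqr_nat int) (size_factorizations generated).
  by rewrite -poincare_predT -Hpoin /Ds -map_comp.
have rhoD w : {morph rho w : a b / (a + b)%R}.
  move=> a b; have [rho_lin _ _ _] := Hrho.
  by rewrite -[a]scale1r rho_lin !scale1r.
rewrite (twisted_predT_factorizations generated (mult_bijective_fits_inj Hbij)
           size_fact Hrho).
by rewrite (map_comp (twisted S rho) D) endprod_twisted_factorizations.
Qed.
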